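(* Let $\mathbf L$ be an algebraic lattice and let $\eta:L\to L$ satisfy: (I1) $\eta(x)\le x$; (I2) $x\ge y$ implies $\eta(x)\ge\eta(y)$; (I3) $\eta^2(x)=\eta(x)$; (I4) $\eta(1)=1$; (I5) if $\eta(x)=u$ for all $x\in X\subseteq L$ then $\eta(\bigvee X)=u$. Define $\tau(x)=\bigvee\{z\in L:\eta(z)=\eta(x)\}$. Then for any subset $\{x_j:j\in J\}\subseteq L$, \[ \tau\Big(\bigwedge_{j\in J}x_j\Big)\ \ge\ \bigwedge_{j\in J}\tau(x_j). \] *)

From Stdlib Require Import List.

Record complete_lattice := CompleteLattice {
  carrier :> Type;
  le : carrier -> carrier -> Prop;
  le_refl : forall x, le x x;
  le_trans : forall x y z, le x y -> le y z -> le x z;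
  le_antisym : forall x y, le x y -> le y x -> x = y;
  sup : (carrier -> Prop) -> carrier;
  sup_ub : forall (A : carrier -> Prop) x, A x -> le x (sup A);
  sup_least : forall (A : carrier -> Prop) y,
      (forall x, A x -> le x y) -> le (sup A) y
}.

Arguments le {c} _ _.
Arguments sup {c} _.

Definition inf {L : complete_lattice} (A : L -> Prop) : L :=
  sup (fun y => forall x, A x -> le y x).

Definition top {L : complete_lattice} : L := sup (fun _ => True).

Definition compact {L : complete_lattice} (c : L) : Prop :=
  forall A : L -> Prop, le c (sup A) ->
    exists s : list L, (forall x, In x s -> A x) /\ le c (sup (fun x => In x s)).

Definition algebraic (L : complete_lattice) : Prop :=
  forall x : L, x = sup (fun c => compact c /\ le c x).

Definition tau {L : complete_lattice} (eta : L -> L) (x : L) : L :=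
  sup (fun z => eta z = eta x).

(* Put w := /\ x_j and m := /\ tau(x_j). Since x_j <= tau(x_j) we have w <= m;
   since eta(tau(x_j)) = eta(x_j) <= x_j, monotonicity gives eta(m) <= w.
   Applying eta to w <= m and to eta(m) <= w (with idempotence) yields
   eta(m) = eta(w), so m is one of the joinands of tau(w). *)

Lemma inf_lb (L : complete_lattice) (A : L -> Prop) (a : L) : A a -> le (inf A) a.
Proof. intro Ha. apply sup_least. intros y Hy. exact (Hy a Ha). Qed.

Lemma inf_glb (L : complete_lattice) (A : L -> Prop) (y : L) :
  (forall a, A a -> le y a) -> le y (inf A).
Proof. intro H. apply (sup_ub L (fun y => forall a, A a -> le y a)). exact H. Qed.

Lemma le_tau (L : complete_lattice) (eta : L -> L) (a : L) : le a (tau eta a).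
Proof. apply (sup_ub L (fun z => eta z = eta a)). reflexivity. Qed.

Lemma le_tau_of_eta_eq (L : complete_lattice) (eta : L -> L) (z a : L) :
  eta z = eta a -> le z (tau eta a).
Proof. apply (sup_ub L (fun z => eta z = eta a)). Qed.

Section Interior.

Variables (L : complete_lattice) (eta : L -> L).
Hypothesis eta_le : forall x, le (eta x) x.
Hypothesis eta_mono : forall x y, le y x -> le (eta y) (eta x).
Hypothesis eta_idem : forall x, eta (eta x) = eta x.
Hypothesis eta_sup_const : forall (X : L -> Prop) (u : L), (exists x, X x) ->
  (forall x, X x -> eta x = u) -> eta (sup X) = u.

Lemma eta_tau (a : L) : eta (tau eta a) = eta a.
Proof. apply eta_sup_const; [exists a; reflexivity | trivial]. Qed.

Lemma eta_eq_of_sandwich (w m : L) : le w m -> le (eta m) w -> eta m = eta w.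
Proof.
  intros Hwm Hmw. apply le_antisym.
  - rewrite <- eta_idem. exact (eta_mono _ _ Hmw).
  - exact (eta_mono _ _ Hwm).
Qed.

Lemma eta_inf_tau (J : Type) (x : J -> L) :
  eta (inf (fun y => exists j, y = tau eta (x j))) =
  eta (inf (fun y => exists j, y = x j)).
Proof.
  apply eta_eq_of_sandwich; apply inf_glb; intros a [j ->].
  - apply le_trans with (x j); [apply inf_lb; now exists j | apply le_tau].
  - apply le_trans with (eta (tau eta (x j))).
    + apply eta_mono, inf_lb. now exists j.
    + rewrite eta_tau. apply eta_le.
Qed.

End Interior.

Theorem lemma5p3 (L : complete_lattice) (HL : algebraic L) (eta : L -> L)
  (I1 : forall x, le (eta x) x)
  (I2 : forall x y, le y x -> le (eta y) (eta x))
  (I3 : forall x, eta (eta x) = eta x)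
  (I4 : eta top = top)
  (I5 : forall (X : L -> Prop) (u : L), (exists x, X x) ->
          (forall x, X x -> eta x = u) -> eta (sup X) = u)
  (J : Type) (x : J -> L) :
  le (inf (fun y => exists j, y = tau eta (x j)))
     (tau eta (inf (fun y => exists j, y = x j))).
Proof.
  apply le_tau_of_eta_eq.
  exact (eta_inf_tau L eta I1 I2 I3 I5 J x).
Qed.
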